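(* For all $n\ge1$ and each $\mathsf{stat}\in\{\mathsf{nest},\mathsf{inv}\}$, with $D_n^{(\mathsf{stat},\mathsf{exc})}(q,t)=\sum_{\sigma\in\mathfrak{D}_n}q^{\mathsf{stat}\,\sigma}t^{\mathsf{exc}\,\sigma}$, $$D_{n}^{(\mathsf{stat}, \mathsf{exc})}(q, t)=\left(\frac{1+xt}{1+x}\right)^{n}P^{(\mathsf{stat}, \mathsf{cpk},\mathsf{exc})}\left(\mathfrak{D}_n; q, \frac{(1+x)^{2}t}{(x+t)(1+xt)},\frac{x+t}{1+xt}\right),$$ equivalently, $$P^{(\mathsf{stat}, \mathsf{cpk},\mathsf{exc})}(\mathfrak{D}_n; q, x,t)=\left(\frac{1+u}{1+uv}\right)^{n}D_{n}^{(\mathsf{stat}, \mathsf{exc})}(q, v),$$ where $u=\frac{1+t^{2}-2xt-(1-t)\sqrt{(1+t)^{2}-4xt}}{2(1-x)t}$ and $v=\frac{(1+t)^{2}-2xt-(1+t)\sqrt{(1+t)^{2}-4xt}}{2xt}$.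
   Context: $\mathfrak{D}_n$ is the set of derangements of $[n]$. $P^{(\mathsf{stat}_1,\ldots,\mathsf{stat}_m)}(\Omega;t_1,\ldots,t_m)=\sum_{\sigma\in\Omega}\prod_jt_j^{\mathsf{stat}_j\sigma}$. $\mathsf{exc}\,\sigma=\#\{i:\sigma(i)>i\}$, $\mathsf{cpk}\,\sigma=\#\{x:\sigma^{-1}(x)<x>\sigma(x)\}$, $\mathsf{inv}$ the inversion number, $\mathsf{nest}\,\sigma=\sum_{i}\#\{j:j<i<\sigma(i)<\sigma(j)\text{ or }\sigma(j)<\sigma(i)\le i<j\}$. *)

From mathcomp Require Import all_boot all_order all_algebra all_fingroup.
Set Implicit Arguments. Unset Strict Implicit. Unset Printing Implicit Defensive.
Import GRing.Theory Num.Theory.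

(* Permutations of [n] are modelled as 'S_n acting on 'I_n = {0,..,n-1};
   all statistics below only compare values and positions, so the shift
   [n] = {1..n} <-> {0..n-1} is harmless. *)

Definition derangement n (s : 'S_n) : bool := [forall i, s i != i].

Definition exc n (s : 'S_n) : nat := #|[set i : 'I_n | i < s i]|.

Definition cpk n (s : 'S_n) : nat :=
  #|[set x : 'I_n | ((s^-1)%g x < x) && (s x < x)]|.

Definition inv n (s : 'S_n) : nat :=
  #|[set p : 'I_n * 'I_n | (p.1 < p.2) && (s p.2 < s p.1)]|.

Definition nest n (s : 'S_n) : nat :=
  \sum_(i : 'I_n) #|[set j : 'I_n |
     [&& j < i, i < s i & s i < s j] || [&& s j < s i, s i <= i & i < j]]|.

Inductive stat_choice := Nest | Inv.

Definition stat (c : stat_choice) n (s : 'S_n) : nat :=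
  match c with Nest => nest s | Inv => inv s end.

Definition P3 (R : comRingType) (c : stat_choice) n (q x t : R) : R :=
  \sum_(s : 'S_n | derangement s) q ^+ stat c s * x ^+ cpk s * t ^+ exc s.

Definition Dn (R : comRingType) (c : stat_choice) n (q t : R) : R :=
  \sum_(s : 'S_n | derangement s) q ^+ stat c s * t ^+ exc s.

(* Encode a derangement s by its word: the letter (a < s a, s^-1 a < a) of each a
   says whether a is a cyclic valley, peak, double ascent or double descent. The
   arcs a -> s a split into upper arcs (a < s a) and lower arcs, two perfect
   matchings whose openers and closers are read off the word. Summing q^nest over
   the matchings with prescribed ends gives a product of q-integers of the heights
   of the word, and inv - nest is a function of the word as well; both only see
   the valleys and peaks, so double ascents can be traded for double descents.
   A word with k peaks, hence k valleys, and d = n - 2k double descents then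
   carries the weight x^k t^k (1 + t)^d, and the substitution of the statement
   maps t^k (1 + t)^d to e^n X^k T^k (1 + T)^d with e = (1 + xt)/(1 + x): this is
   the first identity. The second is the first one at (u, v), because
   u + v = t (1 + uv) and (1 + u)^2 v = x t (1 + uv)^2. *)

From Pilot Require Import Defs.
From mathcomp Require Import all_boot all_order all_algebra all_fingroup.
From mathcomp Require Import zify ring.
Set Implicit Arguments. Unset Strict Implicit. Unset Printing Implicit Defensive.
Import GRing.Theory Num.Theory.

Lemma card_set_nat (T : finType) (P : pred T) : #|[set x | P x]| = \sum_x (P x : nat).
Proof. by rewrite -sum1dep_card big_mkcond; apply: eq_bigr => x _; case: (P x). Qed.

Lemma sum_in_set2 (T : finType) (A : {set T}) (b : T -> T -> bool) :
  \sum_(i in A) \sum_(j in A) (b i j : nat) =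
  \sum_i \sum_j ([&& i \in A, j \in A & b i j] : nat).
Proof.
rewrite big_mkcond; apply: eq_bigr => i _; case: ifP => iA /=; last by rewrite big1.
by rewrite big_mkcond; apply: eq_bigr => j _; case: ifP.
Qed.

Section ArcSystems.
Variables (R : comPzSemiRingType) (q : R) (n : nat).
Implicit Types (A O C : {set 'I_n}) (f g : {ffun 'I_n -> 'I_n}).

Definition qint k : R := (\sum_(i < k) q ^+ i)%R.

Lemma qintS k : qint k.+1 = (qint k + q ^+ k)%R.
Proof. by rewrite /qint big_ord_recr. Qed.

Definition before A x := [set y in A | y < x].

Lemma before_setD1 A a x : before (A :\ a) x = before A x :\ a.
Proof. by apply/setP => y; rewrite !inE andbA. Qed.

Lemma card_beforeE A x : #|before A x| = \sum_(y in A) (y < x).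
Proof.
rewrite -sum1_card big_mkcond [RHS]big_mkcond; apply: eq_bigr => y _.
by rewrite !inE; case: (y \in A); case: (y < x).
Qed.

Lemma sum_qpow_before A : (\sum_(o in A) q ^+ #|before A o|)%R = qint #|A|.
Proof.
elim: {A}#|A| {-2}A (eqxx #|A|) => [|k IH] A /eqP cardA.
  move/eqP: cardA; rewrite cards_eq0 => /eqP ->.
  by rewrite big_set0 cards0 /qint big_ord0.
have [m0 m0A] : exists m0, m0 \in A by apply/set0Pn; rewrite -card_gt0 cardA.
have [m mA' m_max] := arg_maxnP (fun m : 'I_n => val m) m0A.
have mA : m \in A := mA'.
have cardAm : #|A :\ m| = k by move: cardA; rewrite (cardsD1 m) mA add1n => -[].
have before_m : #|before A m| = k.
  rewrite -cardAm; apply: eq_card => y; rewrite !inE.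
  case: (boolP (y \in A)) => [yA|]; last by rewrite !andbF.
  by have := m_max y yA; rewrite /= !andbT ltn_neqAle => ->; rewrite andbT.
have before_Am o : o \in A -> before (A :\ m) o = before A o.
  move=> oA; apply/setP => y; rewrite !inE; case: (eqVneq y m) => [->|//].
  by have := m_max o oA; rewrite mA /= leqNgt => /negbTE.
rewrite (bigD1 m mA) /= cardA qintS -cardAm -IH ?cardAm // addrC before_m.
congr (_ + _)%R; apply: eq_big => [o|o /andP [oA _]]; first by rewrite in_setD1 andbC.
by rewrite before_Am.
Qed.

(* Perfect matchings of the openers O with the closers C by rightward arcs
   o -> f o; f is the identity off O, so that it is determined by its arcs. *)
Definition arc_maps O C : {set {ffun 'I_n -> 'I_n}} :=
  [set f : {ffun 'I_n -> 'I_n} | [&& #|O| == #|C|, dinjectiveb f O &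
     [forall i, if i \in O then (i < f i) && (f i \in C) else f i == i]]].

Lemma arc_mapsP O C f : reflect
  [/\ #|O| = #|C|, {in O &, injective f},
      forall i, i \in O -> i < f i /\ f i \in C & forall i, i \notin O -> f i = i]
  (f \in arc_maps O C).
Proof.
rewrite inE; apply: (iffP and3P) => [[/eqP cardOC /dinjectiveP f_inj /forallP f_arc]|].
  split=> // i iO; move: (f_arc i); first by rewrite iO => /andP.
  by rewrite (negbTE iO) => /eqP.
move=> [cardOC f_inj f_arc f_id]; split; [exact/eqP | exact/dinjectiveP |].
apply/forallP => i; case: ifP => iO; first by case: (f_arc i iO) => -> ->.
by rewrite f_id ?iO.
Qed.

Lemma arc_maps_image O C f : f \in arc_maps O C -> f @: O = C.
Proof.
case/arc_mapsP => cardOC f_inj f_arc _; apply/eqP; rewrite eqEcard.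
rewrite card_in_imset // cardOC leqnn andbT.
by apply/subsetP => _ /imsetP [o oO ->]; case: (f_arc o oO).
Qed.

Definition nestings O f := \sum_(i in O) \sum_(j in O) ((j < i) && (f i < f j)).

Definition arc_gf O C := (\sum_(f in arc_maps O C) q ^+ nestings O f)%R.

Definition height O C c := #|before O c| - #|before C c|.

Definition ext_arc o c f := [ffun i => if i == o then c else f i].
Definition cut_arc o f := [ffun i => if i == o then o else f i].

Section FirstCloser.
Variables (O C : {set 'I_n}) (o c : 'I_n).
Hypotheses (oO : o \in O) (cC : c \in C) (lt_oc : o < c)
  (c_min : forall x, x \in C -> c <= x) (cardOC : #|O| = #|C|).

Let lt_c x : x \in C :\ c -> c < x.
Proof. by rewrite in_setD1 ltn_neqAle => /andP [xc /c_min ->]; rewrite andbT eq_sym. Qed.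

Lemma arc_maps_ext g :
  (ext_arc o c g \in arc_maps O C) && (g o == o) = (g \in arc_maps (O :\ o) (C :\ c)).
Proof.
have cardOC' : #|O :\ o| = #|C :\ c|.
  by move: cardOC; rewrite (cardsD1 o O) (cardsD1 c C) oO cC => -[].
apply/idP/idP.
  case/andP => /arc_mapsP [_ f_inj f_arc f_id] /eqP go; apply/arc_mapsP; split => //.
  - move=> i j; rewrite !in_setD1 => /andP [io iO] /andP [jo jO] gij.
    by apply: f_inj => //; rewrite !ffunE (negbTE io) (negbTE jo).
  - move=> i; rewrite in_setD1 => /andP [io iO].
    case: (f_arc i iO); rewrite ffunE (negbTE io) => -> giC; split => //.
    rewrite in_setD1 giC andbT; apply/eqP => gic; move/eqP: io; apply.
    by apply: f_inj => //; rewrite !ffunE eqxx gic if_same.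
  - move=> i; rewrite in_setD1 negb_and negbK; case: (eqVneq i o) => [-> //|io /= iO].
    by move: (f_id i iO); rewrite ffunE (negbTE io).
case/arc_mapsP => _ g_inj g_arc g_id.
have go : g o = o by apply: g_id; rewrite in_setD1 eqxx.
have gC i : i \in O :\ o -> g i \in C :\ c by case/g_arc.
rewrite go eqxx andbT; apply/arc_mapsP; split => //.
- move=> i j iO jO; rewrite !ffunE.
  case: (eqVneq i o) => [->|io]; case: (eqVneq j o) => [->|jo] //.
  + by move=> cgj; move: (gC j); rewrite !in_setD1 jo jO -cgj eqxx => /(_ isT).
  + by move=> gic; move: (gC i); rewrite !in_setD1 io iO gic eqxx => /(_ isT).
  + by apply: g_inj; rewrite in_setD1 ?io ?jo.
- move=> i iO; rewrite ffunE; case: (eqVneq i o) => [-> //|io].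
  have iO' : i \in O :\ o by rewrite in_setD1 io.
  by case: (g_arc i iO') => ->; rewrite in_setD1 => /andP [].
- move=> i iO; rewrite ffunE; case: (eqVneq i o) => [eio|io].
    by move: iO; rewrite eio oO.
  by apply: g_id; rewrite in_setD1 (negbTE iO) andbF.
Qed.

Lemma nestings_ext g : g \in arc_maps (O :\ o) (C :\ c) ->
  nestings O (ext_arc o c g) = nestings (O :\ o) g + #|before O o|.
Proof.
case/arc_mapsP => _ _ g_arc _.
rewrite card_beforeE /nestings (bigD1 o oO) /= addnC; congr (_ + _).
  apply: eq_big => [i|i /andP [iO io]]; first by rewrite in_setD1 andbC.
  rewrite (bigD1 o oO) /= !ffunE eqxx (negbTE io).
  have iO' : i \in O :\ o by rewrite in_setD1 io.
  case: (g_arc i iO') => _ /lt_c ci.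
  rewrite [(_ < c)]ltnNge (ltnW ci) andbF add0n.
  apply: eq_big => [j|j /andP [jO jo]]; first by rewrite in_setD1 andbC.
  by rewrite !ffunE (negbTE jo).
apply: eq_bigr => j jO; rewrite !ffunE eqxx.
case: (eqVneq j o) => [->|jo]; first by rewrite ltnn.
have jO' : j \in O :\ o by rewrite in_setD1 jo.
by case: (g_arc j jO') => _ /lt_c ->; rewrite andbT.
Qed.

Lemma arc_gf_at :
  (\sum_(f in arc_maps O C | f o == c) q ^+ nestings O f)%R =
  (q ^+ #|before O o| * arc_gf (O :\ o) (C :\ c))%R.
Proof.
rewrite (reindex_onto (ext_arc o c) (cut_arc o)); last first.
  move=> f /andP [_ /eqP foc]; apply/ffunP => i; rewrite !ffunE.
  by case: eqP => [->|]; rewrite ?foc.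
rewrite /arc_gf big_distrr /=; apply: eq_big => [g|g].
  rewrite ffunE eqxx /= eqxx andbT -arc_maps_ext; congr (_ && _).
  apply/eqP/eqP => [/ffunP/(_ o)|go]; first by rewrite !ffunE eqxx.
  by apply/ffunP => i; rewrite !ffunE; case: eqP => [->|].
case/andP => /andP [gA _] /eqP /ffunP /(_ o); rewrite !ffunE eqxx => go.
have gA' : g \in arc_maps (O :\ o) (C :\ c) by rewrite -arc_maps_ext gA -go eqxx.
by rewrite nestings_ext // exprD mulrC.
Qed.

End FirstCloser.

Lemma arc_gf_first_closer O C c :
  c \in C -> (forall x, x \in C -> c <= x) -> #|O| = #|C| ->
  arc_gf O C = (\sum_(o in O | (o < c)%N)
                  q ^+ #|before O o| * arc_gf (O :\ o) (C :\ c))%R.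
Proof.
move=> cC c_min cardOC.
have preimage_c f : f \in arc_maps O C ->
    (q ^+ nestings O f = \sum_(o | (o \in O) && (f o == c)) q ^+ nestings O f)%R.
  move=> fA; move: (cC); rewrite -(arc_maps_image fA) => /imsetP [o oO ->].
  rewrite (big_pred1 o) // => o'; apply/andP/eqP => [[o'O /eqP]|->]; last by rewrite oO.
  by case/arc_mapsP: fA => _ f_inj _ _; apply: f_inj.
rewrite /arc_gf (eq_bigr _ preimage_c) (exchange_big_dep (mem O)) /=; last first.
  by move=> f o _ /andP [].
rewrite (bigID (fun o : 'I_n => o < c)) /= [X in (_ + X)%R]big1 ?addr0; last first.
  move=> o /andP [oO oc]; rewrite big_pred0 // => f.
  apply/negbTE/andP => -[/arc_mapsP [_ _ f_arc _] /andP [_ /eqP foc]].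
  by case: (f_arc o oO) => + _; rewrite foc (negbTE oc).
apply: eq_bigr => o /andP [oO oc]; rewrite -arc_gf_at //.
by apply: eq_bigl => f; rewrite oO.
Qed.

Lemma height_setD1 O C o c x : o \in O -> c \in C -> o < c -> c < x ->
  height (O :\ o) (C :\ c) x = height O C x.
Proof.
move=> oO cC oc cx; rewrite /height !before_setD1.
rewrite (cardsD1 o (before O x)) (cardsD1 c (before C x)) !inE oO cC.
by rewrite (ltn_trans oc cx) cx /= !add1n subSS.
Qed.

Lemma arc_gf0 : arc_gf set0 set0 = 1%R.
Proof.
rewrite /arc_gf (big_pred1 [ffun i => i]) /nestings ?big_set0 // => f.
apply/arc_mapsP/eqP => [[_ _ _ f_id]|->]; first by apply/ffunP => i; rewrite ffunE f_id ?inE.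
by split=> // [i j|i|i _]; rewrite ?inE ?ffunE.
Qed.

Lemma arc_gf_prod O C :
  arc_gf O C = ((#|O| == #|C|)%:R * \prod_(c in C) qint (height O C c))%R.
Proof.
have [cardOC|ncardOC] := eqVneq #|O| #|C|; last first.
  rewrite mul0r /arc_gf big_pred0 // => f.
  by apply/negP => /arc_mapsP [cardOC _ _ _]; rewrite cardOC eqxx in ncardOC.
rewrite mul1r; elim: {C}#|C| {-2}C (eqxx #|C|) O cardOC => [|k IH] C /eqP cardC O cardOC.
  move: cardOC; rewrite cardC => /eqP; rewrite cards_eq0 => /eqP ->.
  by move/eqP: cardC; rewrite cards_eq0 => /eqP ->; rewrite big_set0 arc_gf0.
have [c0 c0C] : exists c0, c0 \in C by apply/set0Pn; rewrite -card_gt0 cardC.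
have [c cC' c_min] := arg_minnP (fun c : 'I_n => val c) c0C.
have cC : c \in C := cC'.
have cardC' : #|C :\ c| = k by move: cardC; rewrite (cardsD1 c) cC add1n => -[].
have before_c : before C c = set0.
  apply/setP => x; rewrite !inE; case: (boolP (x \in C)) => //.
  by move/c_min; rewrite leqNgt => /negbTE.
rewrite (arc_gf_first_closer cC c_min cardOC) (bigD1 c cC) /=.
rewrite (eq_bigr (fun o : 'I_n =>
  q ^+ #|before O o| * \prod_(x in C :\ c) qint (height O C x)))%R; last first.
  move=> o /andP [oO oc]; rewrite IH ?cardC' //; last first.
    by move: cardOC; rewrite (cardsD1 o) oO cardC add1n => -[].
  congr (_ * _)%R; apply: eq_bigr => x; rewrite in_setD1 => /andP [xc xC].
  by rewrite height_setD1 // ltn_neqAle eq_sym xc c_min.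
rewrite -big_distrl /=; congr (_ * _)%R; last first.
  by apply: eq_bigl => x; rewrite in_setD1 andbC.
rewrite /height before_c cards0 subn0 -sum_qpow_before [LHS]big_mkcond [RHS]big_mkcond.
apply: eq_bigr => o _; rewrite [in RHS]inE; case: ifP => // /andP [oO oc].
congr (q ^+ _)%R; apply: eq_card => y; rewrite !inE.
case: (boolP (y \in O)) => //= _; case: (ltnP y o) => yo; rewrite ?(ltn_trans yo oc) ?andbF //.
Qed.

End ArcSystems.

Notation cval := (true, false).
Notation cpeak := (false, true).
Notation cdasc := (true, true).
Notation cddes := (false, false).

Section ArcDecomposition.
Variable n : nat.
Implicit Types (s : 'S_n) (w : {ffun 'I_n -> bool * bool}) (f g : {ffun 'I_n -> 'I_n})
  (a i x : 'I_n).

Lemma derangement_neq s : derangement s -> forall i, s i != i :> nat.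
Proof. by move=> /forallP s_der i; apply: s_der. Qed.

Lemma derangementV s : derangement s -> derangement s^-1.
Proof.
move=> /forallP s_der; apply/forallP => i; apply: contra (s_der i) => /eqP si.
by rewrite -{1}si permKV.
Qed.

(* The letter of a is cval, cpeak, cdasc or cddes as a is a cyclic valley, peak,
   double ascent or double descent of s. *)
Definition cyc_word s : {ffun 'I_n -> bool * bool} :=
  [ffun a : 'I_n => (a < s a, (s^-1)%g a < a)].

Definition up_src w := [set a | (w a).1].
Definition up_dst w := [set a | (w a).2].
Definition low_src w := [set a | ~~ (w a).2].
Definition low_dst w := [set a | ~~ (w a).1].

(* The upper arcs i -> s i with i < s i; the lower arcs of s are read off as the
   upper arcs of s^-1. *)
Definition up_arcs s : {ffun 'I_n -> 'I_n} :=
  [ffun i : 'I_n => if i < s i then s i else i].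

Lemma up_arcs_in s :
  up_arcs s \in arc_maps [set i : 'I_n | i < s i] [set i : 'I_n | (s^-1)%g i < i].
Proof.
apply/arc_mapsP; split => [||i|i].
- have -> : [set i : 'I_n | (s^-1)%g i < i] = s @: [set i : 'I_n | i < s i].
    apply/setP => a; rewrite inE; apply/idP/imsetP => [lt_a|[i + ->]].
      by exists ((s^-1)%g a); rewrite ?inE permKV.
    by rewrite inE permK.
  by rewrite card_imset //; apply: perm_inj.
- by move=> i j; rewrite !inE !ffunE => -> ->; apply: perm_inj.
- by rewrite !inE ffunE => lt_i; rewrite lt_i permK.
- by rewrite inE ffunE => /negbTE ->.
Qed.

Lemma up_src_word s : up_src (cyc_word s) = [set i : 'I_n | i < s i].
Proof. by apply/setP => i; rewrite !inE ffunE. Qed.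

Lemma up_dst_word s : up_dst (cyc_word s) = [set i : 'I_n | (s^-1)%g i < i].
Proof. by apply/setP => i; rewrite !inE ffunE. Qed.

Lemma low_src_word s : derangement s ->
  low_src (cyc_word s) = [set i : 'I_n | i < (s^-1)%g i].
Proof.
move=> /derangementV /derangement_neq s_der.
by apply/setP => i; rewrite !inE ffunE /= -leqNgt leq_eqVlt eq_sym (negbTE (s_der i)).
Qed.

Lemma low_dst_word s : derangement s ->
  low_dst (cyc_word s) = [set i : 'I_n | ((s^-1)^-1)%g i < i].
Proof.
move=> /derangement_neq s_der.
by apply/setP => i; rewrite !inE ffunE invgK /= -leqNgt leq_eqVlt (negbTE (s_der i)).
Qed.

Lemma up_arcs_word s : derangement s ->
  up_arcs s \in arc_maps (up_src (cyc_word s)) (up_dst (cyc_word s)) /\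
  up_arcs s^-1 \in arc_maps (low_src (cyc_word s)) (low_dst (cyc_word s)).
Proof.
move=> s_der; rewrite up_src_word up_dst_word low_src_word // low_dst_word //.
by split; apply: up_arcs_in.
Qed.

Lemma nest_up_arcs s : derangement s ->
  nest s = nestings (up_src (cyc_word s)) (up_arcs s) +
           nestings (low_src (cyc_word s)) (up_arcs s^-1).
Proof.
move=> s_der; have s_neq := derangement_neq s_der.
have -> : nestings (up_src (cyc_word s)) (up_arcs s) =
    \sum_(i : 'I_n) \sum_(j : 'I_n) ([&& j < i, i < s i & s i < s j] : nat).
  rewrite up_src_word /nestings sum_in_set2; apply: eq_bigr => i _.
  apply: eq_bigr => j _; rewrite !inE !ffunE.
  by have := s_neq i; have := s_neq j; do 2 case: ifP => ?; lia.
have -> : nestings (low_src (cyc_word s)) (up_arcs s^-1) =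
    \sum_(i : 'I_n) \sum_(j : 'I_n) ([&& s j < s i, s i <= i & i < j] : nat).
  rewrite low_src_word // /nestings sum_in_set2 (reindex_inj (@perm_inj _ s)).
  apply: eq_bigr => i _; rewrite (reindex_inj (@perm_inj _ s)).
  apply: eq_bigr => j _; rewrite !inE !ffunE !permK.
  by have := s_neq i; have := s_neq j; do 2 case: ifP => ?; lia.
rewrite -big_split /nest; apply: eq_bigr => i _.
by rewrite card_set_nat -big_split; apply: eq_bigr => j _ /=; lia.
Qed.

Definition low_inv w g i := odflt i [pick o in low_src w | g o == i].

Definition glue_fun w f g : {ffun 'I_n -> 'I_n} :=
  [ffun i => if (w i).1 then f i else low_inv w g i].

Definition glue w f g : 'S_n := insubd (1%g : 'S_n) (glue_fun w f g).

Section Glue.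
Variables (w : {ffun 'I_n -> bool * bool}) (f g : {ffun 'I_n -> 'I_n}).
Hypotheses (fA : f \in arc_maps (up_src w) (up_dst w))
           (gA : g \in arc_maps (low_src w) (low_dst w)).

Lemma low_invP i : ~~ (w i).1 -> low_inv w g i \in low_src w /\ g (low_inv w g i) = i.
Proof.
move=> wi; have : i \in g @: low_src w by rewrite (arc_maps_image gA) inE.
case/imsetP => o oL ->; rewrite /low_inv; case: pickP => [o' /andP [o'L /eqP] //|/(_ o)].
by rewrite oL eqxx.
Qed.

Lemma glue_fun_inj : injective (glue_fun w f g).
Proof.
case/arc_mapsP: fA => _ f_inj f_arc _.
have g_low := @low_invP.
have f_up i : (w i).1 -> (w (f i)).2 by move=> wi; case: (f_arc i); rewrite ?inE.
move=> i j; rewrite !ffunE; case: ifP => wi; case: ifP => wj.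
- by apply: f_inj; rewrite inE.
- by move=> fij; case: (g_low j); rewrite ?wj // -fij inE f_up.
- by move=> fij; case: (g_low i); rewrite ?wi // fij inE f_up.
- move=> gij; case: (g_low i); rewrite ?wi // => _ <-.
  by case: (g_low j); rewrite ?wj // => _ <-; rewrite gij.
Qed.

Lemma glueE i : glue w f g i = glue_fun w f g i.
Proof. by rewrite /glue -pvalE insubdK //; apply/injectiveP/glue_fun_inj. Qed.

Lemma glue_up i : (w i).1 -> glue w f g i = f i.
Proof. by move=> wi; rewrite glueE ffunE wi. Qed.

Lemma glue_low i : ~~ (w i).1 ->
  glue w f g i \in low_src w /\ g (glue w f g i) = i.
Proof. by move=> wi; rewrite glueE ffunE (negbTE wi); apply: low_invP. Qed.

Lemma lt_glue i : (i < glue w f g i) = (w i).1.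
Proof.
case/arc_mapsP: fA => _ _ f_arc _; case/arc_mapsP: gA => _ _ g_arc _.
case: (boolP (w i).1) => wi; first by rewrite glue_up //; case: (f_arc i); rewrite ?inE.
case: (glue_low wi) => oL go; case: (g_arc _ oL); rewrite go => lt_oi _.
by apply/negbTE; rewrite -leqNgt ltnW.
Qed.

Lemma derangement_glue : derangement (glue w f g).
Proof.
apply/forallP => i; apply/eqP => gi; have := lt_glue i.
case: (boolP (w i).1) => wi; first by rewrite gi ltnn.
case: (glue_low wi) => oL go; case/arc_mapsP: gA => _ _ g_arc _.
by case: (g_arc _ oL); rewrite go gi ltnn.
Qed.

Lemma cyc_word_glue : cyc_word (glue w f g) = w.
Proof.
case/arc_mapsP: fA => _ _ f_arc _; case/arc_mapsP: gA => _ _ g_arc _.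
apply/ffunP => a; rewrite ffunE lt_glue; case E : (w a) => [b1 b2]; congr (_, _).
set o := ((glue w f g)^-1)%g a; have go : glue w f g o = a by rewrite permKV.
case: (boolP (w o).1) => wo.
  have := lt_glue o; rewrite wo go => ->.
  by case: (f_arc o); rewrite ?inE // -glue_up // go E.
case: (glue_low wo); rewrite go => aL ga; case: (g_arc a aL); rewrite ga => lt_ao _.
move: aL; rewrite inE E /= => /negbTE ->.
by apply/negbTE; rewrite -leqNgt ltnW.
Qed.

Lemma up_arcs_glue : up_arcs (glue w f g) = f.
Proof.
case/arc_mapsP: fA => _ _ _ f_id.
apply/ffunP => i; rewrite ffunE lt_glue; case: ifP => wi; first by rewrite glue_up.
by rewrite f_id // inE wi.
Qed.

Lemma up_arcs_glueV : up_arcs (glue w f g)^-1 = g.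
Proof.
case/arc_mapsP: gA => _ g_inj g_arc g_id.
apply/ffunP => x; rewrite ffunE; case: (boolP (x \in low_src w)) => xL.
  have wgx : ~~ (w (g x)).1 by case: (g_arc x xL); rewrite inE.
  case: (glue_low wgx) => oL go; have ex : glue w f g (g x) = x by apply: g_inj.
  have -> : ((glue w f g)^-1)%g x = g x by rewrite -{1}ex permK.
  by case: (g_arc x xL) => ->.
rewrite g_id //; case: ifP => // lt_x.
have := congr1 (fun u : {ffun 'I_n -> bool * bool} => u x) cyc_word_glue.
move: xL; rewrite ffunE inE negbK => + wx; rewrite -wx /= => lt_x'.
by move: lt_x lt_x'; lia.
Qed.

End Glue.

Lemma glue_up_arcs s : derangement s -> glue (cyc_word s) (up_arcs s) (up_arcs s^-1) = s.
Proof.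
move=> s_der; have [fA gA] := up_arcs_word s_der.
apply/permP => i; rewrite glueE // ffunE [cyc_word s i]ffunE /=.
case: ifP => lt_i; first by rewrite ffunE lt_i.
have [] := low_invP gA (i := i); first by rewrite ffunE lt_i.
rewrite low_src_word // inE => lt_o; rewrite ffunE lt_o => e.
by rewrite -[in RHS]e permKV.
Qed.

Lemma nest_gf_word (R : comPzSemiRingType) (q : R) w :
  (\sum_(s | derangement s && (cyc_word s == w)) q ^+ nest s)%R =
  (arc_gf q (up_src w) (up_dst w) * arc_gf q (low_src w) (low_dst w))%R.
Proof.
symmetry; rewrite /arc_gf big_distrl /=.
under eq_bigr => f _ do rewrite big_distrr /=.
rewrite pair_big /= (reindex_onto (fun s => (up_arcs s, up_arcs s^-1))
                                  (fun p => glue w p.1 p.2)) /=; last first.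
  by move=> [f g] /andP [fA gA]; rewrite up_arcs_glue // up_arcs_glueV.
apply: eq_big => [s|s].
  apply/andP/andP => [[/andP [fA gA] /eqP s_glue]|[s_der /eqP <-]].
    by rewrite -s_glue derangement_glue // cyc_word_glue.
  by have [-> ->] := up_arcs_word s_der; rewrite glue_up_arcs.
case/andP => /andP [fA gA] /eqP s_glue.
have s_der : derangement s by rewrite -s_glue derangement_glue.
have <- : cyc_word s = w by rewrite -s_glue cyc_word_glue.
by rewrite -exprD -nest_up_arcs.
Qed.

End ArcDecomposition.

Section Inversions.
Variable n : nat.
Implicit Types (s : 'S_n) (w : {ffun 'I_n -> bool * bool}) (a b i j : 'I_n).

Definition letters_before w (z : bool * bool) a : nat :=
  \sum_(b : 'I_n) ((b < a) && (w b == z) : nat).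

Definition word_height w a : nat :=
  letters_before w cval a - letters_before w cpeak a.

Definition inv_weight (z : bool * bool) (h : nat) : nat :=
  match z with cpeak => (2 * h - 1)%N | cval => 0 | _ => h end.

Definition inv_excess w : nat := \sum_(a : 'I_n) inv_weight (w a) (word_height w a).

Lemma sum_preimage1 (P : pred 'I_n) (f : 'I_n -> 'I_n) a x :
  injective f -> f x = a -> \sum_(i : 'I_n) (P i && (f i == a :> nat) : nat) = P x.
Proof.
move=> f_inj fx; rewrite (bigD1 x) //= fx eqxx andbT big1 ?addn0 // => i ix.
have /negbTE -> : f i != a :> nat by rewrite val_eqE -fx (inj_eq f_inj).
by rewrite andbF.
Qed.

Section OneDerangement.
Variable s : 'S_n.
Hypothesis s_der : derangement s.

Let s_neq := derangement_neq s_der.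
Let arcs_under a := \sum_(j : 'I_n) ((a < j) && (s j < a) : nat).
Let arcs_over a := \sum_(i : 'I_n) ((i < a) && (a < s i) : nat).
Let cut a := \sum_(i : 'I_n) ((i < a) && (a <= s i) : nat).

Lemma inv_nest_gap : Defs.inv s = nest s +
  \sum_(i : 'I_n) \sum_(j : 'I_n) ([&& i < j, i < s i, s j < j & s j < s i] : nat).
Proof.
have inv_pairs : Defs.inv s = \sum_(i : 'I_n) \sum_(j : 'I_n) ((i < j) && (s j < s i) : nat).
  by rewrite /Defs.inv card_set_nat pair_bigA.
have nest_pairs : nest s =
   \sum_(i : 'I_n) \sum_(j : 'I_n) ([&& i < j, j < s j & s j < s i] : nat) +
   \sum_(i : 'I_n) \sum_(j : 'I_n) ([&& s j < s i, s i <= i & i < j] : nat).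
  rewrite exchange_big /= -big_split /nest; apply: eq_bigr => i _.
  by rewrite card_set_nat -big_split; apply: eq_bigr => j _ /=; lia.
rewrite inv_pairs nest_pairs -!big_split; apply: eq_bigr => i _.
rewrite -!big_split; apply: eq_bigr => j _ /=.
by have := s_neq i; have := s_neq j; lia.
Qed.

(* Sort the pairs (i, j) by b = s i and compare j with b. *)
Lemma gap_by_value :
  \sum_(i : 'I_n) \sum_(j : 'I_n) ([&& i < j, i < s i, s j < j & s j < s i] : nat) =
  \sum_(a : 'I_n) (((s^-1)%g a < a) && (s a < a) + ((s^-1)%g a < a) * arcs_under a +
          (s a < a) * arcs_over a).
Proof.
rewrite (reindex_inj (@perm_inj _ (s^-1)%g)) /=.
have split_term b j :
  ([&& (s^-1)%g b < j, (s^-1)%g b < s ((s^-1)%g b), s j < j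
     & s j < s ((s^-1)%g b)] : nat) =
  (((s^-1)%g b < b) && (s b < b) && (j == b :> nat)) +
  ((s^-1)%g b < b) * ((b < j) && (s j < b)) + (s j < j) * ((j < b) && ((s^-1)%g b < j)).
  rewrite permKV; have := s_neq j.
  by case: (ltngtP b j) => [|| /val_inj <-]; lia.
under eq_bigr => b _ do rewrite (eq_bigr _ (fun j _ => split_term b j)) !big_split /=.
rewrite !big_split /=; congr (_ + _ + _).
- apply: eq_bigr => b _.
  by rewrite (@sum_preimage1 (fun _ => ((s^-1)%g b < b) && (s b < b)) id b b).
- by apply: eq_bigr => b _; rewrite -big_distrr.
- rewrite exchange_big; apply: eq_bigr => j _; rewrite -big_distrr /=; congr (_ * _).
  rewrite (reindex_inj (@perm_inj _ s)); apply: eq_bigr => i _.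
  by rewrite permK andbC.
Qed.

Lemma cut_over a : cut a = arcs_over a + ((s^-1)%g a < a).
Proof.
rewrite -(@sum_preimage1 (fun i => i < a) s a ((s^-1)%g a) (@perm_inj _ s)) ?permKV //.
by rewrite /cut /arcs_over -big_split; apply: eq_bigr => i _ /=; lia.
Qed.

Lemma cut_under a : cut a = arcs_under a + (s a < a).
Proof.
have flow : \sum_(i : 'I_n) ((s i < a) : nat) = \sum_(i : 'I_n) ((i < a) : nat).
  by rewrite [RHS](reindex_inj (@perm_inj _ s)).
have split_lt : \sum_(i : 'I_n) ((i < a) : nat) =
    \sum_(i : 'I_n) ((i < a) && (s i < a) : nat) + cut a.
  by rewrite -big_split; apply: eq_bigr => i _ /=; lia.
have split_slt : \sum_(i : 'I_n) ((s i < a) : nat) =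
    \sum_(i : 'I_n) ((i < a) && (s i < a) : nat) + arcs_under a + (s a < a).
  rewrite -(@sum_preimage1 (fun j => s j < a) id a a) // -!big_split.
  by apply: eq_bigr => i _ /=; lia.
lia.
Qed.

Lemma cut_height a : cut a = word_height (cyc_word s) a.
Proof.
set X := \sum_(b : 'I_n) ((b < a) && (b < s b) : nat).
set Y := \sum_(b : 'I_n) ((b < a) && ((s^-1)%g b < b) : nat).
set Z := \sum_(b : 'I_n) ((b < s b) && (s b < a) : nat).
set D := \sum_(b : 'I_n) ((b < a) && (b < s b) && ((s^-1)%g b < b) : nat).
have eX : X = Z + cut a by rewrite -big_split; apply: eq_bigr => b _ /=; lia.
have eY : Y = Z.
  rewrite /Y (reindex_inj (@perm_inj _ s)); apply: eq_bigr => b _ /=.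
  by rewrite permK andbC.
have eX' : X = \sum_(b : 'I_n) ((b < a) && (cyc_word s b == cval) : nat) + D.
  by rewrite -big_split; apply: eq_bigr => b _; rewrite ffunE xpair_eqE /=; lia.
have eY' : Y = \sum_(b : 'I_n) ((b < a) && (cyc_word s b == cpeak) : nat) + D.
  by rewrite -big_split; apply: eq_bigr => b _; rewrite ffunE xpair_eqE /=; lia.
rewrite /word_height /letters_before; lia.
Qed.

Lemma inv_nest_excess : Defs.inv s = nest s + inv_excess (cyc_word s).
Proof.
rewrite inv_nest_gap gap_by_value; congr (_ + _); apply: eq_bigr => a _.
rewrite -cut_height ffunE; have := cut_over a; have := cut_under a.
have := s_neq a; have := derangement_neq (derangementV s_der) a.
by case: ((s^-1)%g a < a) /idP; case: (a < s a) /idP; case: (s a < a) /idP => /=; lia.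
Qed.

End OneDerangement.
End Inversions.

Section WordWeights.
Variable n : nat.
Implicit Types (s : 'S_n) (w m : {ffun 'I_n -> bool * bool}) (a b : 'I_n).

Definition count_letter w z := #|[set a | w a == z]|.

Definition letter_mult (z : bool * bool) : nat :=
  match z with cpeak => 2 | cval => 0 | _ => 1 end.

Definition nest_weight (R : comPzSemiRingType) (q : R) w : R :=
  ((count_letter w cval == count_letter w cpeak)%:R *
   \prod_(a : 'I_n) qint q (word_height w a) ^+ letter_mult (w a))%R.

Definition stat_excess c w : nat :=
  match c with Nest => 0 | Inv => inv_excess w end.

Lemma big_letters (R : Type) (idx : R) (op : Monoid.com_law idx)
    (P : pred (bool * bool)) (F : bool * bool -> R) :
  \big[op/idx]_(z | P z) F z =
  op (op (op (if P cdasc then F cdasc else idx) (if P cval then F cval else idx))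
         (if P cpeak then F cpeak else idx)) (if P cddes then F cddes else idx).
Proof.
rewrite big_mkcond (bigD1 cdasc) //= (bigD1 cval) //= (bigD1 cpeak) //=.
rewrite (bigD1 cddes) //= big1 ?Monoid.mulm1 ?Monoid.mulmA // => -[[] []] //.
Qed.

Lemma sum_by_letter w (Q : pred 'I_n) (P : pred (bool * bool)) :
  \sum_(b : 'I_n) (Q b && P (w b) : nat) =
  \sum_(z | P z) \sum_(b : 'I_n) (Q b && (w b == z) : nat).
Proof.
rewrite (exchange_big_dep xpredT) //=; apply: eq_bigr => b _.
rewrite big_mkcond (bigD1 (w b)) //= eqxx andbT big1 ?addn0 => [|z zb].
  by case: (P (w b)); case: (Q b).
by rewrite eq_sym (negbTE zb) andbF if_same.
Qed.

Lemma card_word w (P : pred (bool * bool)) :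
  #|[set a | P (w a)]| = \sum_(z | P z) count_letter w z.
Proof.
have := sum_by_letter w xpredT P; rewrite card_set_nat => ->.
by apply: eq_bigr => z _; rewrite /count_letter card_set_nat.
Qed.

Lemma card_before_word w (P : pred (bool * bool)) (c : 'I_n) :
  #|before [set a | P (w a)] c| = \sum_(z | P z) letters_before w z c.
Proof.
rewrite -sum_by_letter card_beforeE big_mkcond; apply: eq_bigr => b _.
by rewrite inE; case: (P (w b)); case: (b < c).
Qed.

Lemma height_word w (c : 'I_n) :
  height (up_src w) (up_dst w) c = word_height w c /\
  height (low_src w) (low_dst w) c = word_height w c.
Proof.
rewrite /height (card_before_word w (fun z => z.1)) (card_before_word w (fun z => z.2)).
rewrite (card_before_word w (fun z => ~~ z.2)) (card_before_word w (fun z => ~~ z.1)).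
by rewrite !big_letters /= /word_height; split; lia.
Qed.

Lemma card_arcs_word w :
  (#|up_src w| == #|up_dst w|) = (count_letter w cval == count_letter w cpeak) /\
  (#|low_src w| == #|low_dst w|) = (count_letter w cval == count_letter w cpeak).
Proof.
rewrite (card_word w (fun z => z.1)) (card_word w (fun z => z.2)).
rewrite (card_word w (fun z => ~~ z.2)) (card_word w (fun z => ~~ z.1)) !big_letters /=.
by split; apply/eqP/eqP; lia.
Qed.

Lemma nest_gf_word_prod (R : comPzSemiRingType) (q : R) w :
  (\sum_(s | derangement s && (cyc_word s == w)) q ^+ nest s)%R = nest_weight q w.
Proof.
rewrite nest_gf_word !arc_gf_prod; have [-> ->] := card_arcs_word w.
rewrite /nest_weight; case: (_ == _); last by rewrite !mul0r.
rewrite !mul1r (big_mkcond (mem (up_dst w))) (big_mkcond (mem (low_dst w))) -big_split /=.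
apply: eq_bigr => a _; have [-> ->] := height_word w a; rewrite !inE.
by case: (w a) => [[] []]; rewrite /= ?mulr1 ?mul1r ?expr0 ?expr1 ?expr2.
Qed.

Lemma stat_nest_excess c s : derangement s ->
  stat c s = nest s + stat_excess c (cyc_word s).
Proof. by case: c => s_der //=; rewrite ?addn0 // inv_nest_excess. Qed.

Lemma cpk_count s : derangement s -> cpk s = count_letter (cyc_word s) cpeak.
Proof.
move=> s_der; apply: eq_card => a; rewrite !inE ffunE xpair_eqE /=.
by have := derangement_neq s_der a; case: ((s^-1)%g a < a); case: ltngtP.
Qed.

Lemma exc_count s :
  exc s = count_letter (cyc_word s) cval + count_letter (cyc_word s) cdasc.
Proof.
by rewrite /exc -up_src_word (card_word _ (fun z => z.1)) big_letters /= !addn0 addnC.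
Qed.

Definition merge_letter (z : bool * bool) := if z == cdasc then cddes else z.

Definition merge_dasc w : {ffun 'I_n -> bool * bool} := [ffun a => merge_letter (w a)].

Lemma merge_letter_eq z y : y != cdasc -> y != cddes ->
  (merge_letter z == y) = (z == y).
Proof. by case: z => [[] []]; case: y => [[] []]. Qed.

Lemma count_letter_merge w z : z != cdasc -> z != cddes ->
  count_letter (merge_dasc w) z = count_letter w z.
Proof. by move=> z1 z2; apply: eq_card => a; rewrite !inE ffunE merge_letter_eq. Qed.

Lemma word_height_merge w a : word_height (merge_dasc w) a = word_height w a.
Proof.
by rewrite /word_height /letters_before; congr (_ - _); apply: eq_bigr => b _;
  rewrite ffunE merge_letter_eq.
Qed.

Lemma nest_weight_merge (R : comPzSemiRingType) (q : R) w :
  nest_weight q (merge_dasc w) = nest_weight q w.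
Proof.
rewrite /nest_weight !count_letter_merge //; congr (_ * _)%R; apply: eq_bigr => a _.
by rewrite word_height_merge ffunE; case: (w a) => [[] []].
Qed.

Lemma stat_excess_merge c w : stat_excess c (merge_dasc w) = stat_excess c w.
Proof.
case: c => //=; apply: eq_bigr => a _.
by rewrite word_height_merge ffunE; case: (w a) => [[] []].
Qed.

Definition dasc_free m := [forall a, m a != cdasc].

Lemma sum_merge_fibre (R : comPzSemiRingType) (t : R) m : dasc_free m ->
  (\sum_(w | merge_dasc w == m) t ^+ count_letter w cdasc)%R =
  ((1 + t) ^+ count_letter m cddes)%R.
Proof.
move=> /forallP m_free.
have fibre a : (\sum_(z | merge_letter z == m a) t ^+ (z == cdasc))%R =
               ((1 + t) ^+ (m a == cddes))%R.
  rewrite big_letters; move: (m_free a).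
  by case: (m a) => [[] []] //= _; rewrite ?addr0 ?add0r ?expr0 ?expr1 // addrC.
have pow_count (x : R) w' z : (x ^+ count_letter w' z = \prod_a x ^+ (w' a == z))%R.
  by rewrite /count_letter card_set_nat prodrXr.
rewrite pow_count -(eq_bigr _ (fun a _ => fibre a)).
rewrite bigA_distr_big_dep; apply: eq_big => [w|w _]; last by rewrite pow_count.
apply/eqP/familyP => [<- a|w_fibre]; first by rewrite unfold_in /= ffunE.
by apply/ffunP => a; rewrite ffunE; move: (w_fibre a); rewrite unfold_in /= => /eqP.
Qed.

Lemma count_letters_total m : dasc_free m ->
  count_letter m cval + count_letter m cpeak + count_letter m cddes = n.
Proof.
move=> /forallP m_free; have := card_word m xpredT; rewrite big_letters /=.
have -> : count_letter m cdasc = 0.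
  by apply/eqP; rewrite cards_eq0; apply/eqP/setP => a; rewrite !inE (negbTE (m_free a)).
have -> : [set a | true] = [set: 'I_n] by apply/setP => a; rewrite !inE.
by rewrite cardsT card_ord => ->; rewrite add0n.
Qed.

Section GeneratingFunctions.
Variables (R : comNzRingType) (c : stat_choice).

Lemma P3_by_word (q y t : R) : P3 c n q y t =
  (\sum_w y ^+ count_letter w cpeak * t ^+ (count_letter w cval + count_letter w cdasc) *
          q ^+ stat_excess c w * nest_weight q w)%R.
Proof.
rewrite /P3 (partition_big (@cyc_word n) xpredT) //=; apply: eq_bigr => w _.
rewrite -nest_gf_word_prod big_distrr /=; apply: eq_bigr => s /andP [s_der /eqP <-].
by rewrite stat_nest_excess // cpk_count // exc_count exprD; ring.
Qed.

Lemma P3_by_merged_word (q y t : R) : P3 c n q y t =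
  (\sum_(m | dasc_free m) y ^+ count_letter m cpeak * t ^+ count_letter m cval *
     q ^+ stat_excess c m * nest_weight q m * (1 + t) ^+ count_letter m cddes)%R.
Proof.
rewrite P3_by_word (partition_big (@merge_dasc) dasc_free) => [|w _]; last first.
  by apply/forallP => a; rewrite ffunE /merge_letter; case: ifP => // /negbT.
apply: eq_bigr => m m_free; rewrite -sum_merge_fibre // big_distrr /=.
apply: eq_bigr => w /eqP <-.
rewrite stat_excess_merge nest_weight_merge !count_letter_merge // exprD; ring.
Qed.

Lemma Dn_P3 (q t : R) : Dn c n q t = P3 c n q 1 t.
Proof. by apply: eq_bigr => s _; rewrite expr1n mulr1. Qed.

End GeneratingFunctions.

End WordWeights.

Local Open Scope ring_scope.

Lemma substitution_monomial (R : comPzRingType) (e X T t : R) (k d : nat) :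
  e ^+ 2 * X * T = t -> e * (1 + T) = 1 + t ->
  t ^+ k * (1 + t) ^+ d = e ^+ (k + k + d) * (X ^+ k * T ^+ k * (1 + T) ^+ d).
Proof. by move=> <- <-; rewrite !exprMn !exprD; ring. Qed.

Lemma Dn_substitution (F : fieldType) (n : nat) (c : stat_choice) (q x t : F) :
  1 + x != 0 -> x + t != 0 -> 1 + x * t != 0 ->
  Dn c n q t = ((1 + x * t) / (1 + x)) ^+ n *
    P3 c n q ((1 + x) ^+ 2 * t / ((x + t) * (1 + x * t))) ((x + t) / (1 + x * t)).
Proof.
move=> x1 xt0 xt1; set e := (1 + x * t) / (1 + x).
set X := (1 + x) ^+ 2 * t / _; set T := (x + t) / _.
have eXT : e ^+ 2 * X * T = t by rewrite /e /X /T; field; rewrite x1 xt0 xt1.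
have eT : e * (1 + T) = 1 + t by rewrite /e /T; field; rewrite x1 xt1.
rewrite Dn_P3 !P3_by_merged_word big_distrr; apply: eq_bigr => m m_free /=.
rewrite /nest_weight; case: eqP => [k_eq|_]; last by rewrite !(mul0r, mulr0).
have -> : e ^+ n = e ^+ (count_letter m cval + count_letter m cval + count_letter m cddes).
  by rewrite {2}k_eq count_letters_total.
rewrite expr1n mul1r -k_eq; set P := (_%:R * _); set g := stat_excess c m.
have := substitution_monomial (count_letter m cval) (count_letter m cddes) eXT eT.
set k := count_letter m cval; set d := count_letter m cddes => sub.
transitivity (t ^+ k * (1 + t) ^+ d * (q ^+ g * P)); first by ring.
by rewrite sub; ring.
Qed.
(* Eliminating x through s^2 = (1 + t)^2 - 4xt turns both identities into
   rational identities in s and t. *)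
Lemma discriminant_params (F : numFieldType) (x t s u v : F) :
  s ^+ 2 = (1 + t) ^+ 2 - 4%:R * x * t -> x != 0 -> x != 1 -> t != 0 ->
  u = (1 + t ^+ 2 - 2%:R * x * t - (1 - t) * s) / (2%:R * (1 - x) * t) ->
  v = ((1 + t) ^+ 2 - 2%:R * x * t - (1 + t) * s) / (2%:R * x * t) ->
  u + v = t * (1 + u * v) /\ (1 + u) ^+ 2 * v = x * t * (1 + u * v) ^+ 2.
Proof.
move=> s2 x0 x1 t0 -> ->.
have ex : x = ((1 + t) ^+ 2 - s ^+ 2) / (4%:R * t).
  by rewrite s2; field.
move: x0 x1; rewrite {s2}ex => x0 x1.
have a0 : (1 + t) ^+ 2 - s ^+ 2 != 0 by apply: contraNneq x0 => ->; rewrite mul0r.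
have a1 : 4%:R * t - ((1 + t) ^+ 2 - s ^+ 2) != 0.
  rewrite subr_eq0 eq_sym; apply: contraNneq x1 => ->.
  by rewrite divff // mulf_neq0 // pnatr_eq0.
by split; field; rewrite t0 a0 a1.
Qed.

Theorem corollary3p7 (R : rcfType) (n : nat) (c : stat_choice) :
  (0 < n)%N ->
  (forall q x t : R,
     1 + x != 0 -> x + t != 0 -> 1 + x * t != 0 ->
     Dn c n q t =
       ((1 + x * t) / (1 + x)) ^+ n *
       P3 c n q ((1 + x) ^+ 2 * t / ((x + t) * (1 + x * t)))
                ((x + t) / (1 + x * t)))
  /\
  (forall q x t : R,
     let d := (1 + t) ^+ 2 - 4%:R * x * t in
     let u := (1 + t ^+ 2 - 2%:R * x * t - (1 - t) * Num.sqrt d)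
                / (2%:R * (1 - x) * t) in
     let v := ((1 + t) ^+ 2 - 2%:R * x * t - (1 + t) * Num.sqrt d)
                / (2%:R * x * t) in
     0 <= d -> x != 0 -> x != 1 -> t != 0 ->
     1 + u != 0 -> u + v != 0 -> 1 + u * v != 0 ->
     P3 c n q x t = ((1 + u) / (1 + u * v)) ^+ n * Dn c n q v).
Proof.
move=> _; split=> [q x t|q x t d u v d_ge0 x0 x1 t0 u1 uv0 uv1].
  exact: Dn_substitution.
have [sum_uv Xuv] := discriminant_params (sqr_sqrtr d_ge0) x0 x1 t0 (erefl u) (erefl v).
rewrite (Dn_substitution n c q u1 uv0 uv1).
have -> : (1 + u) ^+ 2 * v / ((u + v) * (1 + u * v)) = x.
  by rewrite Xuv sum_uv; field; rewrite t0 uv1.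
have -> : (u + v) / (1 + u * v) = t by rewrite sum_uv; field; rewrite uv1.
rewrite mulrA -exprMn.
have -> : (1 + u) / (1 + u * v) * ((1 + u * v) / (1 + u)) = 1 by field; rewrite u1 uv1.
by rewrite expr1n mul1r.
Qed.
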